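(* Let $f,g\in\mathbb{R}[x,y]$ with $f(0,0)=g(0,0)=0$, both regular in $x$, such that $\{f=0\}\subset\{g=0\}$ near the origin, and let $\mathscr{L}_g(f)$ be the Łojasiewicz exponent of $f$ with respect to $g$. (1) If $0<\mathscr{L}_g(f)<1$, then $\displaystyle\lim_{(x,y)\to(0,0)}\frac{g(x,y)}{f(x,y)}=0$. (2) If $\mathscr{L}_g(f)>1$, then the limit $\displaystyle\lim_{(x,y)\to(0,0)}\frac{g(x,y)}{f(x,y)}$ does not exist.
   Context: A polynomial $f=f_m+f_{m+1}+\cdots$ ($f_k$ homogeneous of degree $k$, $f_m\not\equiv0$, $m\ge1$) is regular in $x$ if $f_m(1,0)\neq0$. The Łojasiewicz exponent $\mathscr{L}_g(f)$ is the infimum of all $\alpha>0$ for which there exist $C,r>0$ with $|f(x,y)|\ge C|g(x,y)|^\alpha$ for $|(x,y)|\le r$. The limit is taken over points where $f\neq0$. *)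

From HB Require Import structures.
From mathcomp Require Import all_boot all_order all_algebra.
From mathcomp Require Import all_classical all_reals all_analysis.
Set Implicit Arguments. Unset Strict Implicit. Unset Printing Implicit Defensive.
Import Order.TTheory GRing.Theory Num.Theory.
Import numFieldNormedType.Exports.
Local Open Scope ring_scope.
Local Open Scope classical_set_scope.

(* A real polynomial in two variables x, y is represented as
   p : {poly {poly R}}, p = \sum_j p_j(x) y^j.                         *)

Definition bcoef (R : nzRingType) (p : {poly {poly R}}) (i j : nat) : R :=
  (p`_j)`_i.

Definition peval2 (R : comNzRingType) (p : {poly {poly R}}) (z : R * R) : R :=
  (p.[z.2%:P]).[z.1].

Definition hom_part (R : nzRingType) (p : {poly {poly R}}) (k : nat) (x y : R) : R :=
  \sum_(i < k.+1) bcoef p i (k - i) * x ^+ i * y ^+ (k - i).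

Definition regular_in_x (R : nzRingType) (p : {poly {poly R}}) : Prop :=
  exists m : nat, (1 <= m)%N /\
    (forall i j : nat, (i + j < m)%N -> bcoef p i j = 0) /\
    (exists x y : R, hom_part p m x y != 0) /\
    hom_part p m 1 0 != 0.

Definition norm2 (R : realType) (z : R * R) : R := Num.sqrt (z.1 ^+ 2 + z.2 ^+ 2).

Definition loj_exponent (R : realType) (f g : {poly {poly R}}) : \bar R :=
  ereal_inf [set (alpha%:E)%E | alpha in
    [set alpha : R | 0 < alpha /\
      exists C r : R, 0 < C /\ 0 < r /\
        forall z : R * R, norm2 z <= r ->
          C * (`|peval2 g z| `^ alpha) <= `|peval2 f z| ]].

From HB Require Import structures.
From mathcomp Require Import all_boot all_order all_algebra.
From mathcomp Require Import all_classical all_reals all_analysis.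
From mathcomp Require Import lra.
Set Implicit Arguments. Unset Strict Implicit. Unset Printing Implicit Defensive.
Import Order.TTheory GRing.Theory Num.Theory.
Import numFieldNormedType.Exports.
Local Open Scope ring_scope.
Local Open Scope classical_set_scope.

(* If C |g|^a <= |f| with a < 1, then |g / f| <= |g|^(1 - a) / C, which tends
   to 0 with g; this gives (1).  Conversely, if g / f has a limit l at the
   origin then, since f = 0 forces g = 0 there, |g| <= (|l| + 1) |f| near the
   origin, so the exponent 1 is admissible and L_g(f) <= 1; this gives (2). *)

Section Lojasiewicz.
Variable R : realType.

Lemma norm_ratio_le_powR (a C x y : R) : a < 1 -> 0 < C -> y != 0 ->
  C * `|x| `^ a <= `|y| -> `|x / y| <= `|x| `^ (1 - a) / C.
Proof.
move=> a1 C0 y0 bound; have [->|x0] := eqVneq x 0.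
  by rewrite mul0r normr0 divr_ge0 ?powR_ge0 ?ltW.
have xE : `|x| = `|x| `^ (1 - a) * `|x| `^ a.
  by rewrite -powRD ?subrK ?powRr1 // normr_eq0 x0 implybT.
rewrite normrM normfV ler_pdivrMr ?normr_gt0 // mulrAC ler_pdivlMr //.
by rewrite {1}xE -mulrA ler_wpM2l ?powR_ge0 // mulrC.
Qed.

Lemma cvg0_ratio_of_powR_bound {T} (F : set_system T) {FF : Filter F}
    (f g : T -> R) (a C : R) :
  a < 1 -> 0 < C -> g @ F --> 0 ->
  (\forall z \near F, f z != 0 /\ C * `|g z| `^ a <= `|f z|) ->
  (fun z => g z / f z) @ F --> 0.
Proof.
move=> a1 C0 g0 bound; apply/cvgr0Pnorm_lt => eps eps0.
have b0 : 0 < 1 - a by rewrite subr_gt0.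
pose d := (eps * C) `^ (1 - a)^-1.
have d0 : 0 < d by rewrite powR_gt0 ?mulr_gt0.
have dE : d `^ (1 - a) = eps * C.
  by rewrite -powRrM mulVf ?gt_eqF // powRr1 // ltW ?mulr_gt0.
near=> z; have [fz0 bz] : f z != 0 /\ C * `|g z| `^ a <= `|f z| by near: z.
rewrite (le_lt_trans (norm_ratio_le_powR a1 C0 fz0 bz)) //.
rewrite ltr_pdivrMr // -dE gt0_ltr_powR ?nnegrE ?normr_ge0 ?(ltW d0) //.
by near: z; exact: cvgr0_norm_lt.
Unshelve. all: by end_near.
Qed.

Lemma near_norm_le_of_ratio_cvg {T} (F : set_system T) {FF : Filter F}
    (f g : T -> R) (l : R) :
  (fun z => g z / f z) @ within [set z | f z != 0] F --> l ->
  (\forall z \near F, f z = 0 -> g z = 0) ->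
  \forall z \near F, `|g z| <= (`|l| + 1) * `|f z|.
Proof.
move=> /cvgrPdist_lt /(_ 1 ltr01); rewrite near_withinE => near_l zeros.
apply: filterS2 near_l zeros => z near_lz zeros_z.
have [fz0|fz0] := eqVneq (f z) 0; first by rewrite zeros_z // fz0 !normr0 mulr0.
have : `|g z / f z| <= `|l| + 1.
  by rewrite -[g z / f z](subKr l) (le_trans (ler_normB _ _)) // lerD2l ltW ?near_lz.
by rewrite normrM normfV ler_pdivrMr ?normr_gt0.
Qed.

Implicit Types (p f g : {poly {poly R}}) (z : R * R).

Lemma peval2_continuous p : continuous (peval2 p).
Proof.
elim/poly_ind: p => [|q c IHq] z.
  under [peval2 0]funext do rewrite /peval2 !horner0.
  exact: cvg_cst.
have -> : peval2 (q * 'X + c%:P) = (fun z => peval2 q z * z.2 + c.[z.1]).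
  by apply/funext => w; rewrite /peval2 hornerMXaddC hornerD hornerM hornerC.
apply: cvgD; first by apply: cvgM; [exact: IHq | exact: cvg_snd].
apply: (continuous_comp (f := fst)); [exact: cvg_fst | exact: continuous_horner].
Qed.

Lemma nbhs0_norm2_le (r : R) : 0 < r ->
  \forall z \near ((0 : R), (0 : R)), norm2 z <= r.
Proof.
move=> r0; apply/nbhs_ballP; exists (r / 2); first exact: divr_gt0.
move=> z; rewrite /ball /= /prod_ball /ball /= !sub0r !normrN => -[z1 z2].
rewrite /norm2 -(ger0_norm (ltW r0)) -sqrtr_sqr ler_wsqrtr //.
rewrite -(real_normK (num_real z.1)) -(real_normK (num_real z.2)).
have := normr_ge0 z.1; have := normr_ge0 z.2; nra.
Qed.

Lemma nbhs0_norm2P (P : set (R * R)) :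
  (\forall z \near ((0 : R), (0 : R)), P z) ->
  exists2 r : R, 0 < r & forall z, norm2 z <= r -> P z.
Proof.
move=> /nbhs_ballP [e e0 He]; exists (e / 2); first exact: divr_gt0.
move=> z z_le; apply: He; rewrite /ball /= /prod_ball /ball /= !sub0r !normrN.
have norm2_gt : norm2 z < e by apply: le_lt_trans z_le _; rewrite gtr_pMr ?invf_lt1 ?ltr1n.
have [z1 z2] : `|z.1| <= norm2 z /\ `|z.2| <= norm2 z.
  by rewrite /norm2 -!sqrtr_sqr !ler_wsqrtr // ?lerDl ?lerDr sqr_ge0.
by split; apply: le_lt_trans norm2_gt.
Qed.

Definition loj_admissible f g (alpha : R) : Prop :=
  0 < alpha /\ exists C r : R, 0 < C /\ 0 < r /\
    forall z, norm2 z <= r -> C * (`|peval2 g z| `^ alpha) <= `|peval2 f z|.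

Lemma loj_admissible1 f g (K r : R) : 0 < K -> 0 < r ->
  (forall z, norm2 z <= r -> `|peval2 g z| <= K * `|peval2 f z|) ->
  loj_admissible f g 1.
Proof.
move=> K0 r0 bound; split => //; exists K^-1, r; rewrite invr_gt0; do 2!split => //.
by move=> z /bound gz; rewrite powRr1 // mulrC ler_pdivrMr // mulrC.
Qed.

Lemma loj_exponent_le f g (alpha : R) :
  loj_admissible f g alpha -> (loj_exponent f g <= alpha%:E)%E.
Proof. by move=> adm; apply: ereal_inf_lbound; exists alpha. Qed.

Lemma loj_exponent_lt f g (b : R) : (loj_exponent f g < b%:E)%E ->
  exists2 alpha : R, alpha < b & loj_admissible f g alpha.
Proof. by move=> /ereal_inf_lt [_ [alpha adm <-]]; rewrite lte_fin; exists alpha. Qed.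

End Lojasiewicz.

Theorem proposition5p1 (R : realType) (f g : {poly {poly R}}) :
  peval2 f (0, 0) = 0 -> peval2 g (0, 0) = 0 ->
  regular_in_x f -> regular_in_x g ->
  (\forall z \near ((0 : R), (0 : R)), peval2 f z = 0 -> peval2 g z = 0) ->
  (((0 < loj_exponent f g)%E /\ (loj_exponent f g < 1)%E) ->
     (fun z => peval2 g z / peval2 f z)
       @ within [set z | peval2 f z != 0] (nbhs ((0 : R), (0 : R))) --> (0 : R))
  /\
  ((1 < loj_exponent f g)%E ->
     ~ exists l : R,
       (fun z => peval2 g z / peval2 f z)
         @ within [set z | peval2 f z != 0] (nbhs ((0 : R), (0 : R))) --> l).
Proof.
move=> _ g0 _ _ zeros; split.
- move=> [_ /loj_exponent_lt [a a1 [_ [C [r [C0 [r0 bound]]]]]]].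
  apply: (cvg0_ratio_of_powR_bound a1 C0).
    apply: cvg_within_filter.
    by move: (@peval2_continuous _ g (0, 0)); rewrite /continuous_at g0.
  rewrite near_withinE; apply: filterS (nbhs0_norm2_le r0).
  by move=> z /bound bz fz0; split.
- move=> L_gt1 [l /near_norm_le_of_ratio_cvg /(_ zeros) /nbhs0_norm2P [r r0 bound]].
  suff : (loj_exponent f g <= 1%:E)%E by rewrite leNgt L_gt1.
  by apply/loj_exponent_le/(loj_admissible1 _ r0 bound); rewrite ltr_wpDl.
Qed.
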